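(* Consider the Best-or-Worst secretary problem with $n\ge1$ candidates. Then there exists an integer $r(n)$ with $0\le r(n)\le n$ such that the following strategy is optimal (maximizes the probability of success among all strategies): reject the first $r(n)$ interviewed candidates; after that, accept the first candidate which is either better than all the preceding candidates or worse than all the preceding candidates.
   Context: Setting (secretary-type problem): $n$ candidates have distinct qualities (a strict total order) and are interviewed one at a time in uniformly random order (all $n!$ orders equally likely). After the $k$-th interview, the interviewer knows only the relative ranks of the first $k$ candidates among themselves and must immediately and irrevocably either accept the $k$-th candidate (stopping the process) or reject it; rejected candidates cannot be recalled. A strategy is a rule that makes this decision at each step using only the relative ranks observed so far (it may end up accepting nobody). In the Best-or-Worst problem, the strategy succeeds if the accepted candidate is either the overall best or the overall worst of all $n$ candidates (the two outcomes are equally valued); a strategy is optimal if it maximizes the probability of success. *)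

From mathcomp Require Import all_boot all_order all_fingroup all_algebra.
Set Implicit Arguments. Unset Strict Implicit. Unset Printing Implicit Defensive.
Import GRing.Theory Num.Theory.

(* An interview order with qualities: sigma k = quality of the candidate
   interviewed at (0-based) step k; qualities are 0 (worst) .. n-1 (best).
   A uniformly random sigma : {perm 'I_n} models the uniformly random order. *)

Definition relrank n (sigma : {perm 'I_n}) (k : nat) (i : 'I_n) : nat :=
  #|[pred j : 'I_n | (j < k) && (sigma j < sigma i)]|.

(* The information available after the k-th interview: the sequence of the
   relative ranks of the first k candidates among themselves. *)
Definition pattern n (sigma : {perm 'I_n}) (k : nat) : seq nat :=
  map (relrank sigma k) (filter (fun i : 'I_n => (i < k)%N) (enum 'I_n)).

(* A (deterministic) strategy: after the k-th interview, given the observed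
   relative ranks of the first k candidates (a sequence of length k), decide
   whether to accept (true) the k-th candidate. *)
Definition strategy := seq nat -> bool.

Definition success n (s : strategy) (sigma : {perm 'I_n}) : bool :=
  [exists k : 'I_n,
     [&& s (pattern sigma k.+1),
         [forall j : 'I_n, (j < k) ==> ~~ s (pattern sigma j.+1)] &
         (val (sigma k) == 0) || (val (sigma k) == n.-1)]].

Definition success_prob n (s : strategy) : rat :=
  ((#|[set sigma : {perm 'I_n} | success s sigma]|)%:R / (n`!)%:R)%R.

Definition threshold (r : nat) : strategy := fun p =>
  (r < size p) && ((last 0 p == 0) || (last 0 p == (size p).-1)).

From mathcomp Require Import all_boot all_order all_fingroup all_algebra.
From mathcomp Require Import zify lra.
Import Order.TTheory GRing.Theory Num.Theory.
Set Implicit Arguments. Unset Strict Implicit. Unset Printing Implicit Defensive.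

(* A strategy only sees relative ranks, so whether it has rejected the first [k]
   candidates depends only on the comparisons among them.  Inserting the last
   candidate at a uniformly random quality shows that, given any such event, the
   relative rank of candidate [k] is uniform on [0..k], and that a relatively best
   (worst) [k]-th candidate is best (worst) overall with probability [(k+1)/n].
   So if [p k] counts the orders in which the strategy stops at [k] on a
   relatively extreme candidate and [q k] those in which it reaches [k], then
   [n * #successes = \sum_k w k * p k] with [0 <= p k <= a k * q k] and
   [q k.+1 <= q k - p k], where [a k = 2/(k+1)] ([a 0 = 1]) and the weight
   [w k] ([= k+1] for [k > 0]) is increasing.  Backward induction bounds any such sum by [v 0 * n`!], where [v]
   is the dynamic-programming value; [v] decreases, and equality holds for the
   threshold strategy that starts accepting at the first [k] with
   [v k.+1 <= w k]. *)

Lemma card_ord_pred n (p : pred nat) : #|[pred j : 'I_n | p j]| = count p (iota 0 n).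
Proof. by rewrite -val_enum_ord count_map -size_filter cardE /enum_mem filter_predT. Qed.

Lemma filter_iota_lt m n : m <= n -> [seq i <- iota 0 n | i < m] = iota 0 m.
Proof. by move=> hmn; have := filter_iota_ltn 0 hmn; rewrite add0n. Qed.

Lemma count_iota_prefix m n (p : pred nat) : m <= n ->
  count (fun j => (j < m) && p j) (iota 0 n) = count p (iota 0 m).
Proof.
move=> hmn; rewrite -(filter_iota_lt hmn) count_filter.
by apply: eq_count => j; rewrite /= andbC.
Qed.

Lemma count_iota_lt c n : c <= n -> count (fun j => j < c) (iota 0 n) = c.
Proof. by move=> hcn; rewrite -size_filter filter_iota_lt ?size_iota. Qed.

Lemma iotaSr m : iota 0 m.+1 = rcons (iota 0 m) m.
Proof. by rewrite -cats1 -addn1 iotaD. Qed.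

Lemma card_perm_pred n (s : {perm 'I_n}) (p : pred 'I_n) :
  #|[pred j | p (s j)]| = #|[pred a | p a]|.
Proof.
transitivity #|s @^-1: [set a | p a]|; first by apply: eq_card => j; rewrite !inE.
by rewrite card_preimset; [apply: eq_card => a; rewrite inE | exact: perm_inj].
Qed.

Lemma sum_ord_eq n c X : c < n -> \sum_(v < n) (val v == c) * X = X.
Proof.
move=> hc; rewrite (bigD1 (Ordinal hc)) //= eqxx mul1n big1 ?addn0 // => v hv.
by rewrite (negbTE (hv : val v != c)).
Qed.

Lemma sum_ord_ltn n X : \sum_(v < n.+1) (v < n) * X = n * X.
Proof.
rewrite big_ord_recr /= ltnn addn0.
by under eq_bigr do rewrite ltn_ord mul1n; rewrite sum_nat_const card_ord.
Qed.

Lemma sum_ord_gt0 n X : \sum_(v < n.+1) (0 < v) * X = n * X.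
Proof.
rewrite big_ord_recl /= add0n.
by under eq_bigr do rewrite mul1n; rewrite sum_nat_const card_ord.
Qed.

Lemma bump_eq_last n v a : a < n -> v <= n -> (bump v a == n) = (a == n.-1) && (v < n).
Proof. by move=> ha hv; rewrite /bump; case: (leqP v a) => h /=; lia. Qed.

Lemma bump_eq0 v a : (bump v a == 0) = (a == 0) && (0 < v).
Proof. by rewrite /bump; case: (leqP v a) => h /=; lia. Qed.

Lemma existsb_sum_uniq (T : finType) (b : pred T) :
  (forall i j, b i -> b j -> i = j) -> [exists k, b k] = \sum_k b k :> nat.
Proof.
move=> hb; case: existsP => [[k hk] | h].
  rewrite (bigD1 k) //= hk big1 // => j hjk; case: (boolP (b j)) => // hj.
  by rewrite (hb _ _ hj hk) eqxx in hjk.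
by rewrite big1 // => j _; case: (boolP (b j)) => // hj; case: h; exists j.
Qed.

Lemma find_iota_upclosed (p : pred nat) n : (forall i j, i <= j < n -> p i -> p j) ->
  forall j, j < n -> (find p (iota 0 n) <= j) = p j.
Proof.
move=> hp j hj; apply/idP/idP => [hr | pj]; last first.
  by rewrite leqNgt; apply/negP => /(before_find 0); rewrite nth_iota // add0n pj.
have hrn : find p (iota 0 n) < n := leq_ltn_trans hr hj.
apply: (hp (find p (iota 0 n))); first by rewrite hr.
have hhas : has p (iota 0 n) by rewrite has_find size_iota.
by have := nth_find 0 hhas; rewrite nth_iota // add0n.
Qed.

Lemma descending_ind n (P : nat -> Prop) : P n -> (forall k, k < n -> P k.+1 -> P k) ->
  forall k, k <= n -> P k.
Proof.
move=> Pn PS k hk; have [m] := ubnP (n - k); elim: m k hk => // m IH k hk hm.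
have [-> //|hkn] := eqVneq k n.
have hkn' : k < n by rewrite ltn_neqAle hkn hk.
by apply: PS hkn' (IH _ hkn' _); lia.
Qed.

(* [qual s i] is the quality of the [i]-th candidate, with the junk value 0
   for [i >= n]: this lets comparisons be relations on [nat]. *)
Definition qual n (s : {perm 'I_n}) (i : nat) : nat :=
  oapp (fun j : 'I_n => val (s j)) 0 (insub i).

Definition worse n (s : {perm 'I_n}) : rel nat := fun i j => qual s i < qual s j.

Lemma qualE n (s : {perm 'I_n}) (j : 'I_n) : qual s j = s j.
Proof. by rewrite /qual valK. Qed.

Lemma qual_lt n (s : {perm 'I_n}) i : i < n -> qual s i < n.
Proof. by move=> hi; rewrite -[i]/(val (Ordinal hi)) qualE. Qed.

Lemma worse_irr n (s : {perm 'I_n}) : irreflexive (worse s).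
Proof. by move=> i; rewrite /worse ltnn. Qed.

Definition nworse (R : rel nat) (k i : nat) : nat := count (R^~ i) (iota 0 k).

Definition patternR (R : rel nat) (m : nat) : seq nat := [seq nworse R m i | i <- iota 0 m].

Lemma relrankE n (s : {perm 'I_n}) m (i : 'I_n) : m <= n ->
  relrank s m i = nworse (worse s) m i.
Proof.
move=> hm; rewrite /relrank /nworse -(count_iota_prefix _ hm) -card_ord_pred.
by apply: eq_card => j; rewrite !inE /worse !qualE.
Qed.

Lemma patternE n (s : {perm 'I_n}) m : m <= n -> pattern s m = patternR (worse s) m.
Proof.
move=> hm; rewrite /pattern /patternR -(filter_iota_lt hm) -val_enum_ord.
by rewrite filter_map -map_comp; apply: eq_map => i /=; rewrite relrankE.
Qed.

Lemma last_patternR R k : irreflexive R -> last 0 (patternR R k.+1) = nworse R k k.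
Proof.
move=> irrR; rewrite /patternR /nworse iotaSr map_rcons last_rcons.
by rewrite -cats1 count_cat /= irrR !addn0.
Qed.

Definition observable T m (e : rel nat -> T) :=
  forall R R' : rel nat, (forall i j, i < m -> j < m -> R i j = R' i j) -> e R = e R'.

Lemma observableW T m m' (e : rel nat -> T) : m <= m' -> observable m e -> observable m' e.
Proof.
move=> hm he R R' h; apply: he => i j hi hj.
by apply: h; apply: leq_trans hm.
Qed.

Lemma observable_nworse k i : i <= k -> observable k.+1 (fun R => nworse R k i).
Proof.
move=> hik R R' h; apply: eq_in_count => j; rewrite mem_iota add0n => /andP[_ hj].
by apply: h; [exact: ltnW | rewrite ltnS].
Qed.

Lemma observable_patternR m : observable m (patternR^~ m).
Proof.
move=> R R' h; apply/eq_in_map => i; rewrite mem_iota add0n => /andP[_ hi].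
apply: eq_in_count => j; rewrite mem_iota add0n => /andP[_ hj]; exact: h.
Qed.

Section PermExtend.

Variable n : nat.
Implicit Types (s : {perm 'I_n}) (v : 'I_n.+1).

Definition extend_fun s v (i : 'I_n.+1) : 'I_n.+1 :=
  if unlift ord_max i is Some j then lift v (s j) else v.

Lemma extend_fun_inj s v : injective (extend_fun s v).
Proof.
move=> i1 i2; rewrite /extend_fun.
case: unliftP => [j1 ->|->]; case: unliftP => [j2 ->|->] //.
- by move/lift_inj/perm_inj => ->.
- by move=> E; have := neq_lift v (s j1); rewrite E eqxx.
- by move=> E; have := neq_lift v (s j2); rewrite -E eqxx.
Qed.

Definition perm_extend s v : {perm 'I_n.+1} := perm (@extend_fun_inj s v).

Lemma perm_extend_lift s v (j : 'I_n) : perm_extend s v (lift ord_max j) = lift v (s j).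
Proof. by rewrite permE /extend_fun liftK. Qed.

Lemma perm_extend_max s v : perm_extend s v ord_max = v.
Proof. by rewrite permE /extend_fun unlift_none. Qed.

Lemma qual_extend s v i : i < n -> qual (perm_extend s v) i = bump v (qual s i).
Proof.
move=> hi; have E : i = lift ord_max (Ordinal hi) by rewrite /= /bump leqNgt hi.
by rewrite {1}E qualE perm_extend_lift -[i]/(val (Ordinal hi)) qualE.
Qed.

Lemma qual_extend_last s v : qual (perm_extend s v) n = v.
Proof. by rewrite -[n]/(val (@ord_max n)) qualE perm_extend_max. Qed.

Lemma worse_extend s v i j : i < n -> j < n -> worse (perm_extend s v) i j = worse s i j.
Proof. by move=> hi hj; rewrite /worse !qual_extend // !ltnNge leq_bump2. Qed.

Lemma observable_extend T m (e : rel nat -> T) s v : m <= n -> observable m e ->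
  e (worse (perm_extend s v)) = e (worse s).
Proof.
move=> hm he; apply: he => i j hi hj.
by apply: worse_extend; apply: leq_trans hm.
Qed.

Lemma perm_extend_bij : bijective (fun p : {perm 'I_n} * 'I_n.+1 => perm_extend p.1 p.2).
Proof.
apply: inj_card_bij; last by rewrite card_prod !card_Sn card_ord factS mulnC.
move=> [s1 v1] [s2 v2] /= E.
have ev : v1 = v2 by rewrite -(perm_extend_max s1 v1) -(perm_extend_max s2 v2) E.
subst v2; congr pair; apply/permP => j; apply: (@lift_inj _ v1).
by rewrite -!perm_extend_lift E.
Qed.

End PermExtend.

Definition nperms n (P : pred {perm 'I_n}) : nat := \sum_(s : {perm 'I_n}) P s.

Lemma eq_nperms n (P Q : pred {perm 'I_n}) : P =1 Q -> nperms P = nperms Q.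
Proof. by move=> h; apply: eq_bigr => s _; rewrite h. Qed.

Lemma leq_nperms n (P Q : pred {perm 'I_n}) : (forall s, P s -> Q s) -> nperms P <= nperms Q.
Proof. by move=> h; apply: leq_sum => s _; case: (boolP (P s)) => // /h ->. Qed.

Lemma nperms_disjoint_or n (P Q1 Q2 : pred {perm 'I_n}) : (forall s, Q1 s -> Q2 s -> false) ->
  nperms (fun s => P s && (Q1 s || Q2 s)) =
  nperms (fun s => P s && Q1 s) + nperms (fun s => P s && Q2 s).
Proof.
move=> h; rewrite /nperms -big_split /=; apply: eq_bigr => s _.
by case: (P s) (Q1 s) (Q2 s) (h s) => [] [] [] // /(_ isT isT).
Qed.

Lemma nperms_extend n (P : pred {perm 'I_n.+1}) :
  nperms P = \sum_(v : 'I_n.+1) nperms (fun s => P (perm_extend s v)).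
Proof.
rewrite /nperms (reindex _ (onW_bij _ (perm_extend_bij n))).
by rewrite exchange_big pair_big /=; apply: eq_big => // -[].
Qed.

Lemma nperms_observable n m (e : pred (rel nat)) : m <= n -> observable m e ->
  nperms (fun s : {perm 'I_n.+1} => e (worse s)) =
  n.+1 * nperms (fun s : {perm 'I_n} => e (worse s)).
Proof.
move=> hm he; rewrite nperms_extend.
rewrite (eq_bigr (fun _ => nperms (fun s : {perm 'I_n} => e (worse s)))) => [|v _].
  by rewrite sum_nat_const card_ord.
by apply: eq_nperms => s; rewrite (observable_extend _ _ hm he).
Qed.

Lemma nworse_extend n k (s : {perm 'I_n}) v : k < n ->
  nworse (worse (perm_extend s v)) k k = nworse (worse s) k k.
Proof. by move=> hk; apply: (observable_extend _ _ hk (observable_nworse (leqnn k))). Qed.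

Lemma nworse_last n (s : {perm 'I_n.+1}) : nworse (worse s) n n = qual s n.
Proof.
rewrite /nworse -(count_iota_prefix _ (leqnSn n)).
rewrite (@eq_in_count _ _ (fun j => qual s j < qual s n)); last first.
  move=> j; rewrite mem_iota ltnS => /andP[_]; rewrite leq_eqVlt => /orP[/eqP->|->] //.
  by rewrite !ltnn.
rewrite -card_ord_pred -[n]/(val (@ord_max n)) qualE.
transitivity #|[pred j : 'I_n.+1 | s j < s ord_max]|.
  by apply: eq_card => j; rewrite !inE qualE.
rewrite (card_perm_pred s (fun a => a < s ord_max)).
by rewrite (card_ord_pred _ (fun x => x < s ord_max)) count_iota_lt // ltnW.
Qed.

Lemma nperms_andl n (b : bool) (P : pred {perm 'I_n}) :
  nperms (fun s => b && P s) = b * nperms P.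
Proof. by rewrite /nperms big_distrr /=; apply: eq_bigr => s _; case: b; rewrite ?mul1n. Qed.

Lemma nperms_nworse n k c (e : pred (rel nat)) : k < n -> c <= k -> observable k e ->
  k.+1 * nperms (fun s : {perm 'I_n} => e (worse s) && (nworse (worse s) k k == c)) =
  nperms (fun s : {perm 'I_n} => e (worse s)).
Proof.
elim: n => [//|n IH] hk hc he; rewrite ltnS in hk.
rewrite (nperms_observable hk he) nperms_extend.
have [ekn|hkn] := eqVneq k n.
  subst k; under eq_bigr => v _.
    rewrite (eq_nperms (Q := fun s => (val v == c) && e (worse s))); last first.
      move=> s; rewrite (observable_extend _ _ hk he) andbC.
      by rewrite nworse_last qual_extend_last.
    rewrite nperms_andl.
  over.
  by rewrite sum_ord_eq.
have {hkn} hk : k < n by rewrite ltn_neqAle hkn.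
under eq_bigr => v _.
  rewrite (eq_nperms (Q := fun s => e (worse s) && (nworse (worse s) k k == c))); last first.
    by move=> s; rewrite nworse_extend // (observable_extend _ _ (ltnW hk) he).
over.
by rewrite sum_nat_const card_ord mulnCA IH.
Qed.

Lemma nperms_best n k (e : pred (rel nat)) : k < n -> observable k.+1 e ->
  n * nperms (fun s : {perm 'I_n} => e (worse s) && (qual s k == n.-1)) =
  k.+1 * nperms (fun s : {perm 'I_n} => e (worse s) && (nworse (worse s) k k == k)).
Proof.
elim: n => [//|n IH] hk he; rewrite ltnS in hk.
have [ekn|hkn] := eqVneq k n.
  by subst k; congr (_ * _); apply: eq_nperms => s; rewrite nworse_last.
have {hkn} hk : k < n by rewrite ltn_neqAle hkn.
rewrite !nperms_extend.
under eq_bigr => v _.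
  rewrite (eq_nperms (Q := fun s => (v < n) && (e (worse s) && (qual s k == n.-1)))); last first.
    move=> s; rewrite /= qual_extend // (observable_extend _ _ hk he).
    by rewrite (bump_eq_last (qual_lt s hk) (ltn_ord v)) andbA andbC.
  rewrite nperms_andl.
  over.
under [in RHS]eq_bigr => v _.
  rewrite (eq_nperms (Q := fun s => e (worse s) && (nworse (worse s) k k == k))); last first.
    by move=> s; rewrite nworse_extend // (observable_extend _ _ hk he).
  over.
by rewrite sum_ord_ltn sum_nat_const card_ord IH // mulnCA.
Qed.

Lemma nperms_worst n k (e : pred (rel nat)) : k < n -> observable k.+1 e ->
  n * nperms (fun s : {perm 'I_n} => e (worse s) && (qual s k == 0)) =
  k.+1 * nperms (fun s : {perm 'I_n} => e (worse s) && (nworse (worse s) k k == 0)).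
Proof.
elim: n => [//|n IH] hk he; rewrite ltnS in hk.
have [ekn|hkn] := eqVneq k n.
  by subst k; congr (_ * _); apply: eq_nperms => s; rewrite nworse_last.
have {hkn} hk : k < n by rewrite ltn_neqAle hkn.
rewrite !nperms_extend.
under eq_bigr => v _.
  rewrite (eq_nperms (Q := fun s => (0 < v) && (e (worse s) && (qual s k == 0)))); last first.
    move=> s; rewrite qual_extend // (observable_extend _ _ hk he).
    by rewrite bump_eq0 andbA andbC.
  rewrite nperms_andl.
  over.
under [in RHS]eq_bigr => v _.
  rewrite (eq_nperms (Q := fun s => e (worse s) && (nworse (worse s) k k == 0))); last first.
    by move=> s; rewrite nworse_extend // (observable_extend _ _ hk he).
  over.
by rewrite sum_ord_gt0 sum_nat_const card_ord IH // mulnCA.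
Qed.

Definition continues (st : strategy) k (R : rel nat) : bool :=
  all (fun j => ~~ st (patternR R j.+1)) (iota 0 k).

Definition stops_at (st : strategy) k (R : rel nat) : bool :=
  continues st k R && st (patternR R k.+1).

Definition rel_extreme k (R : rel nat) : bool := (nworse R k k == 0) || (nworse R k k == k).

Lemma rel_extreme0 R : rel_extreme 0 R.
Proof. by []. Qed.

Lemma observable_continues st k : observable k (continues st k).
Proof.
move=> R R' h; apply: eq_in_all => j; rewrite mem_iota add0n => /andP[_ hj].
by rewrite (observableW hj (@observable_patternR j.+1) h).
Qed.

Lemma observable_stops_at st k : observable k.+1 (stops_at st k).
Proof.
move=> R R' h; rewrite /stops_at (observable_patternR h).
by rewrite (observableW (leqnSn k) (@observable_continues st k) h).
Qed.

Lemma continuesS st k R : continues st k.+1 R = continues st k R && ~~ st (patternR R k.+1).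
Proof. by rewrite /continues iotaSr all_rcons andbC. Qed.

Lemma stops_at_uniq st i j R : stops_at st i R -> stops_at st j R -> i = j.
Proof.
wlog hij : i j / i < j => [hw hi hj|].
  by case: (ltngtP i j) => [h|h|//]; [apply: hw h hi hj | apply/esym/(hw _ _ h hj hi)].
move=> /andP[_ hi] /andP[/allP/(_ i) hj _].
by move: hj; rewrite mem_iota hij hi => /(_ isT).
Qed.

Lemma successE n st (s : {perm 'I_n}) : success st s =
  [exists k : 'I_n, stops_at st k (worse s) && ((qual s k == 0) || (qual s k == n.-1))].
Proof.
apply: eq_existsb => k; rewrite /stops_at !qualE patternE // -!andbA andbCA.
congr (_ && _); apply/forallP/allP => [h j | h j].
  rewrite mem_iota add0n => /andP[_ hj]; have hjn := ltn_trans hj (ltn_ord k).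
  by have := h (Ordinal hjn); rewrite /= hj patternE.
by apply/implyP => hj; rewrite patternE // h // mem_iota.
Qed.

Definition nsuccess n (st : strategy) : nat := @nperms n (success st).

Lemma nsuccessE n st : nsuccess n st = \sum_(k < n)
  nperms (fun s : {perm 'I_n} => stops_at st k (worse s) && ((qual s k == 0) || (qual s k == n.-1))).
Proof.
rewrite /nsuccess /nperms exchange_big /=; apply: eq_bigr => s _.
rewrite successE existsb_sum_uniq // => i j /andP[hi _] /andP[hj _].
exact/val_inj/(stops_at_uniq hi hj).
Qed.

(* [weight n k / n] is the chance that a relatively extreme [k]-th candidate
   is extreme overall; the first candidate is relatively both best and worst. *)
Definition weight n k : nat := if k == 0 then (if n == 1 then 1 else 2) else k.+1.

Lemma weight_monotone n : {homo weight n : i j / i <= j}.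
Proof.
move=> i j hij; rewrite /weight.
by case: (eqVneq i 0) => hi; case: (eqVneq j 0) => hj; case: (n == 1); lia.
Qed.

Definition nstop_extreme n st k :=
  nperms (fun s : {perm 'I_n} => stops_at st k (worse s) && rel_extreme k (worse s)).

Lemma nperms_stop_extreme n st k : k < n ->
  n * nperms (fun s : {perm 'I_n} =>
                stops_at st k (worse s) && ((qual s k == 0) || (qual s k == n.-1)))
  = weight n k * nstop_extreme n st k.
Proof.
move=> hk; have hstop := @observable_stops_at st k.
have [n1|n1] := eqVneq n 1.
  move: hk hstop; rewrite n1 ltnS leqn0 => /eqP -> hstop.
  under eq_nperms do rewrite orbb.
  by rewrite (nperms_worst _ hstop) // /nstop_extreme; congr (_ * _).
rewrite nperms_disjoint_or; last by move=> s /eqP-> /eqP; lia.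
rewrite mulnDr (nperms_worst hk hstop) (nperms_best hk hstop) -mulnDr.
rewrite /weight /nstop_extreme; have [->|k0] := eqVneq k 0.
  by rewrite /= (negbTE n1) mul1n addnn -mul2n.
rewrite -nperms_disjoint_or // => s /eqP -> /eqP hk0; by rewrite -hk0 eqxx in k0.
Qed.

Lemma weighted_nsuccess n st : n * nsuccess n st = \sum_(k < n) weight n k * nstop_extreme n st k.
Proof. by rewrite nsuccessE big_distrr; apply: eq_bigr => k _; apply: nperms_stop_extreme. Qed.

Definition nreach n st k := nperms (fun s : {perm 'I_n} => continues st k (worse s)).

Definition nreach_extreme n st k :=
  nperms (fun s : {perm 'I_n} => continues st k (worse s) && rel_extreme k (worse s)).

Lemma nreach0 n st : nreach n st 0 = n`!.
Proof. by rewrite /nreach /nperms sum1_card card_Sn. Qed.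

Lemma nreachS n st k :
  nreach n st k = nreach n st k.+1 + nperms (fun s : {perm 'I_n} => stops_at st k (worse s)).
Proof.
rewrite /nreach /nperms -big_split; apply: eq_bigr => s _.
by rewrite continuesS /stops_at; case: (continues _ _ _); case: (st _).
Qed.

Lemma nstop_extreme_le_stop n st k :
  nstop_extreme n st k <= nperms (fun s : {perm 'I_n} => stops_at st k (worse s)).
Proof. by apply: leq_nperms => s /andP[]. Qed.

Lemma nstop_extreme_le_reach n st k : nstop_extreme n st k <= nreach_extreme n st k.
Proof. by apply: leq_nperms => s /andP[/andP[-> _] ->]. Qed.

Lemma nreach_extreme0 n st : nreach_extreme n st 0 = nreach n st 0.
Proof. by apply: eq_nperms => s; rewrite rel_extreme0 andbT. Qed.

Lemma nreach_extremeS n st k : 0 < k < n -> k.+1 * nreach_extreme n st k = 2 * nreach n st k.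
Proof.
case/andP=> k0 hk; rewrite /nreach_extreme nperms_disjoint_or; last first.
  by move=> s /eqP -> /eqP hk0; rewrite -hk0 in k0.
have hcont := @observable_continues st k.
by rewrite mulnDr !(nperms_nworse hk _ hcont) // addnn -mul2n.
Qed.

Lemma stops_at_threshold r k R : irreflexive R ->
  stops_at (threshold r) k R = [&& continues (threshold r) k R, r <= k & rel_extreme k R].
Proof.
move=> irrR; rewrite /stops_at /threshold /rel_extreme last_patternR //.
by rewrite size_map size_iota ltnS.
Qed.

Lemma nstop_extreme_threshold n r k :
  nstop_extreme n (threshold r) k = (r <= k) * nreach_extreme n (threshold r) k.
Proof.
rewrite -nperms_andl; apply: eq_nperms => s.
rewrite stops_at_threshold; last exact: worse_irr.
by case: (continues _ _ _); case: (r <= k); case: (rel_extreme _ _).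
Qed.

Lemma nstop_threshold n r k :
  nperms (fun s : {perm 'I_n} => stops_at (threshold r) k (worse s)) = nstop_extreme n (threshold r) k.
Proof.
apply: eq_nperms => s; rewrite stops_at_threshold; last exact: worse_irr.
by case: (continues _ _ _); case: (r <= k); case: (rel_extreme _ _).
Qed.

Section BackwardInduction.
Local Open Scope ring_scope.
Variables (R : realFieldType) (n : nat) (a w : nat -> R).

(* [value k] is the optimal expected payoff from step [k] on when each step [j]
   independently offers the payoff [w j] with probability [a j]; [tail_value m]
   is the value with [m] steps left. *)
Fixpoint tail_value (m : nat) : R :=
  if m is m'.+1 then
    let k := (n - m'.+1)%N in Num.max (tail_value m') (a k * w k + (1 - a k) * tail_value m')
  else 0.

Definition value k := tail_value (n - k).

Lemma value_last : value n = 0.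
Proof. by rewrite /value subnn. Qed.

Lemma valueS k : (k < n)%N ->
  value k = Num.max (value k.+1) (a k * w k + (1 - a k) * value k.+1).
Proof. by move=> hk; rewrite /value -(subnSK hk) /= subnSK // subKn // ltnW. Qed.

Lemma value_ge0 k : 0 <= value k.
Proof. by rewrite /value; elim: (n - k)%N => [|m IH] //=; rewrite le_max IH. Qed.

Lemma value_monotone i j : (i <= j <= n)%N -> value j <= value i.
Proof.
case/andP=> hij hjn; elim: j hij hjn => [|j IH] hij hjn; first by rewrite leqn0 in hij; rewrite (eqP hij).
case: (ltngtP i j.+1) hij => // [hlt _|-> _]; last exact: lexx.
apply: le_trans (IH _ (ltnW hjn)); last by rewrite -ltnS.
by rewrite (valueS hjn) le_max lexx.
Qed.

Variables P Q : nat -> R.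

Lemma weighted_sum_le_value :
  (forall k, (k < n)%N -> 0 <= P k <= a k * Q k) ->
  (forall k, (k < n)%N -> Q k.+1 <= Q k - P k) ->
  (forall k, (k <= n)%N -> 0 <= Q k) ->
  forall k, (k <= n)%N -> \sum_(k <= j < n) w j * P j <= value k * Q k.
Proof.
move=> hP hQ hQ0; apply: descending_ind => [|k hk IH].
  by rewrite big_geq // value_last mul0r.
rewrite big_ltn // (valueS hk); set v := value k.+1.
have /andP[hP0 hPa] := hP k hk.
have hv : v * Q k.+1 <= v * (Q k - P k) by rewrite ler_wpM2l ?value_ge0 ?hQ.
have hQk := hQ0 k (ltnW hk).
apply: le_trans (_ : w k * P k + v * Q k.+1 <= _); first by rewrite lerD2l.
case: (lerP (w k) v) => hw.
- have : (w k - v) * P k <= 0 by rewrite mulr_le0_ge0 // subr_le0.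
  have : v * Q k <= Num.max v (a k * w k + (1 - a k) * v) * Q k by rewrite ler_wpM2r // le_max lexx.
  lra.
- have : (w k - v) * P k <= (w k - v) * (a k * Q k) by rewrite ler_wpM2l // subr_ge0 ltW.
  have : (a k * w k + (1 - a k) * v) * Q k <= Num.max v (a k * w k + (1 - a k) * v) * Q k.
    by rewrite ler_wpM2r // le_max lexx orbT.
  lra.
Qed.

Lemma weighted_sum_eq_value r :
  (forall k, 0 <= a k) ->
  (forall k, (k < n)%N -> P k = if (r <= k)%N then a k * Q k else 0) ->
  (forall k, (k < n)%N -> Q k.+1 = Q k - P k) ->
  (forall k, (k < n)%N -> (r <= k)%N = (value k.+1 <= w k)) ->
  forall k, (k <= n)%N -> \sum_(k <= j < n) w j * P j = value k * Q k.
Proof.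
move=> ha hP hQ hr; apply: descending_ind => [|k hk IH].
  by rewrite big_geq // value_last mul0r.
rewrite big_ltn // IH (valueS hk) hQ // hP // hr //.
have hak := ha k; set v := value k.+1.
case: lerP => hw.
- rewrite max_r; first lra.
  have : 0 <= a k * (w k - v) by rewrite mulr_ge0 // subr_ge0.
  lra.
- rewrite max_l; first lra.
  have : a k * (w k - v) <= 0 by rewrite mulr_ge0_le0 // subr_le0 ltW.
  lra.
Qed.

End BackwardInduction.

Local Open Scope ring_scope.

Definition p_extreme (k : nat) : rat := if k == 0%N then 1 else 2 / k.+1%:R.

Lemma p_extreme_ge0 k : 0 <= p_extreme k.
Proof. by rewrite /p_extreme; case: eqP => // _; rewrite divr_ge0. Qed.

Lemma nreach_extremeE n st k : (k < n)%N ->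
  (nreach_extreme n st k)%:R = p_extreme k * (nreach n st k)%:R.
Proof.
move=> hk; rewrite /p_extreme; have [->|k0] := eqVneq k 0%N.
  by rewrite nreach_extreme0 mul1r.
have hk1 : k.+1%:R != 0 :> rat by rewrite pnatr_eq0.
apply: (mulfI hk1); rewrite -natrM nreach_extremeS ?lt0n ?k0 // natrM.
by rewrite mulrA [k.+1%:R * _]mulrCA divff // mulr1.
Qed.

Definition opt_value n : nat -> rat := value n p_extreme (fun k => (weight n k)%:R).

Lemma weighted_nsuccess_rat n st : n%:R * (nsuccess n st)%:R =
  \sum_(0 <= k < n) (weight n k)%:R * (nstop_extreme n st k)%:R :> rat.
Proof. by rewrite -natrM weighted_nsuccess big_mkord natr_sum; under eq_bigr do rewrite natrM. Qed.

Lemma nsuccess_le_value n st :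
  n%:R * (nsuccess n st)%:R <= opt_value n 0 * n`!%:R.
Proof.
rewrite weighted_nsuccess_rat -(nreach0 n st).
apply: (@weighted_sum_le_value _ n p_extreme _ (fun k => (nstop_extreme n st k)%:R)
          (fun k => (nreach n st k)%:R) _ _ _ 0%N) => // k hk.
  by rewrite ler0n -nreach_extremeE // ler_nat nstop_extreme_le_reach.
by rewrite (nreachS n st k) natrD lerBrDr lerD2l ler_nat nstop_extreme_le_stop.
Qed.

Lemma nsuccess_threshold n r : (forall k, (k < n)%N -> (r <= k)%N = (opt_value n k.+1 <= (weight n k)%:R)) ->
  n%:R * (nsuccess n (threshold r))%:R = opt_value n 0 * n`!%:R.
Proof.
move=> hr; rewrite weighted_nsuccess_rat -(nreach0 n (threshold r)).
apply: (@weighted_sum_eq_value _ n p_extreme _ (fun k => (nstop_extreme n (threshold r) k)%:R)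
          (fun k => (nreach n (threshold r) k)%:R) r _ _ _ hr 0%N) => //.
- exact: p_extreme_ge0.
- move=> k hk; rewrite nstop_extreme_threshold natrM nreach_extremeE //.
  by case: (r <= k)%N; rewrite ?mul1r ?mul0r.
- by move=> k hk; rewrite (nreachS n _ k) nstop_threshold natrD addrK.
Qed.

Lemma success_probE n st : success_prob n st = (nsuccess n st)%:R / n`!%:R.
Proof.
rewrite /success_prob /nsuccess /nperms -sum1_card [in LHS]big_mkcond /=.
by congr (_%:R / _); apply: eq_bigr => s _; rewrite inE; case: (success st s).
Qed.

Definition opt_threshold n : nat :=
  find (fun k => opt_value n k.+1 <= (weight n k)%:R) (iota 0 n).

Lemma opt_threshold_le n : (opt_threshold n <= n)%N.
Proof. by rewrite -[leqRHS](size_iota 0) find_size. Qed.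

Lemma opt_thresholdP n k : (k < n)%N ->
  (opt_threshold n <= k)%N = (opt_value n k.+1 <= (weight n k)%:R).
Proof.
move=> hk; apply: (find_iota_upclosed _ hk) => i j /andP[hij hjn] hi.
apply: le_trans (le_trans _ hi) _; last by rewrite ler_nat weight_monotone.
by apply: value_monotone; rewrite ltnS hij.
Qed.

Theorem theorem1 (n : nat) (hn : (0 < n)%N) :
  exists r : nat, (r <= n)%N /\
    forall s : strategy, success_prob n s <= success_prob n (threshold r).
Proof.
exists (opt_threshold n); split => [|st]; first exact: opt_threshold_le.
rewrite !success_probE ler_pM2r ?invr_gt0 ?ltr0n ?fact_gt0 //.
rewrite -(ler_pM2l (_ : 0 < n%:R :> rat)) ?ltr0n //.
by rewrite nsuccess_threshold ?nsuccess_le_value // => k; apply: opt_thresholdP.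
Qed.
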